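(* Let $G=(V,E)$ be a finite $k$-regular graph, and suppose that the minimal cycle of $G$ has length $n$. Then: (1) the lift $L[G]$ is a $k$-regular graph; (2) the minimal cycle of $L[G]$ has length $2n$.
   Context: Graphs are simple (irreflexive, symmetric edge relation). A cycle of length $m\geq 3$ is a sequence of pairwise distinct vertices $v_1,\dots,v_m$ with $v_iv_{i+1}$ an edge for $i<m$ and $v_mv_1$ an edge. The lift $L[G]$ of a finite graph $G=(V,E)$ is the graph with vertex set $V\times\{0,1\}^{E}$ (pairs of a vertex and a function from the edge set to $\{0,1\}$), where $(u,f)$ and $(v,g)$ are adjacent if and only if $e=\{u,v\}\in E$, $f(e)\neq g(e)$, and $f(e')=g(e')$ for every edge $e'\neq e$. *)

From mathcomp Require Import all_boot.
Set Implicit Arguments. Unset Strict Implicit. Unset Printing Implicit Defensive.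

Definition simple_graph (T : finType) (e : rel T) : Prop :=
  irreflexive e /\ symmetric e.

Definition regular (T : finType) (e : rel T) (k : nat) : Prop :=
  forall x : T, #|[set y | e x y]| = k.

Definition is_cycle (T : finType) (e : rel T) (s : seq T) : Prop :=
  3 <= size s /\ uniq s /\ cycle e s.

Definition min_cycle_length (T : finType) (e : rel T) (n : nat) : Prop :=
  (exists s : seq T, is_cycle e s /\ size s = n) /\
  (forall s : seq T, is_cycle e s -> n <= size s).

Definition is_edge (T : finType) (e : rel T) : pred {set T} :=
  fun s => [exists u, exists v, e u v && (s == [set u; v])].

Definition Edge (T : finType) (e : rel T) : finType := {s : {set T} | is_edge e s}.

Definition lift_vertex (T : finType) (e : rel T) : finType :=
  (T * {ffun Edge e -> bool})%type.

Definition lift_rel (T : finType) (e : rel T) : rel (lift_vertex e) :=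
  fun p q =>
    e p.1 q.1 &&
    [exists x : Edge e,
       (val x == [set p.1; q.1]) && (p.2 x != q.2 x) &&
       [forall y : Edge e, (y != x) ==> (p.2 y == q.2 y)]].
Arguments lift_rel {T} e.
Arguments lift_vertex {T} e.
Arguments Edge {T} e.

From mathcomp Require Import all_boot zify.
Set Implicit Arguments. Unset Strict Implicit. Unset Printing Implicit Defensive.

(* A walk in L[G] projects to a walk in G, and its label after j steps is the
   initial label toggled on every edge traversed an odd number of times so far.
   So the neighbours of (u, f) correspond to those of u, and the cycles of L[G]
   project to closed walks of G traversing every edge an even number of times.
   Going twice around a shortest cycle of G gives a cycle of length 2n in L[G].
   Conversely, a cycle of L[G] projects to a non-backtracking closed walk; at its
   first return to a vertex it has closed a cycle of G of length d >= n, and each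
   of these d distinct edges must be traversed again before the walk closes, so
   its length is at least 2d >= 2n. *)

Section CyclicSequences.
Variables (X : Type) (r : rel X).

Lemma cycle_nth_modP (x0 : X) (s : seq X) : 0 < size s ->
  reflect (forall i, r (nth x0 s (i %% size s)) (nth x0 s (i.+1 %% size s)))
          (cycle r s).
Proof.
case: s => [//|x p] _ /=; set n := (size p).+1.
have nthS i : i < n -> nth x0 (rcons p x) i = nth x0 (x :: p) (i.+1 %% n).
  move=> lt_in; rewrite nth_rcons; case: ltngtP => [lt_ip|gt_ip|->].
  - by rewrite modn_small.
  - by lia.
  - by rewrite -/n modnn.
have nth0 i : i < n -> nth x0 (x :: rcons p x) i = nth x0 (x :: p) i.
  by move=> lt_in; rewrite -rcons_cons nth_rcons /= lt_in.
apply: (iffP (pathP x0)) => [step i | step i].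
  have lt_im : i %% n < n by rewrite ltn_pmod.
  rewrite -addn1 -modnDml addn1 -nthS // -nth0 //.
  by apply: step; rewrite size_rcons.
rewrite size_rcons => lt_in; rewrite nthS // nth0 //.
by have := step i; rewrite modn_small.
Qed.

Lemma cycle_mkseq (f : nat -> X) m : 0 < m -> f m = f 0 ->
  (forall j, j < m -> r (f j) (f j.+1)) -> cycle r (mkseq f m).
Proof.
move=> m_gt0 fm step; apply/(cycle_nth_modP (f 0)); rewrite size_mkseq // => i.
rewrite -addn1 -modnDml addn1 !nth_mkseq ?ltn_pmod //.
have := ltn_pmod i m_gt0; set j := i %% m => lt_jm.
case: (ltngtP j.+1 m) => [lt_Sjm | gt_Sjm | eq_Sjm].
- by rewrite (modn_small lt_Sjm); apply: step.
- by lia.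
- by rewrite eq_Sjm modnn -fm -eq_Sjm; apply: step.
Qed.

End CyclicSequences.

Section Windows.
Variables (X : eqType) (f : nat -> X).

Definition window_injective d := forall j t, 0 < t < d -> f j != f (j + t).

Lemma uniq_window a d : window_injective d -> uniq [seq f t | t <- iota a d].
Proof.
move=> inj; rewrite map_inj_in_uniq ?iota_uniq // => j1 j2.
rewrite !mem_iota => range1 range2 E.
wlog lt_12 : j1 j2 range1 range2 E / j1 < j2.
  move=> wlog; case: (ltngtP j1 j2) => [lt_12 | lt_21 | //]; first exact: wlog.
  by apply/esym/wlog.
have t_window : 0 < j2 - j1 < d by lia.
by case/negP: (inj j1 (j2 - j1) t_window); rewrite subnKC ?E // ltnW.
Qed.

End Windows.

Lemma uniq_window_nth_mod (X : eqType) x0 (s : seq X) : uniq s ->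
  window_injective (fun j => nth x0 s (j %% size s)) (size s).
Proof.
move=> s_uniq j t /andP [t_gt0 lt_ts].
have s_gt0 : 0 < size s by lia.
rewrite /= nth_uniq ?ltn_pmod // -{1}[j]addn0 eqn_modDl mod0n modn_small //.
by rewrite eq_sym -lt0n.
Qed.

Section Walks.
Variables (T : finType) (W : nat -> T).

Definition step_edge t : {set T} := [set W t; W t.+1].

Definition walk_edges a l : seq {set T} := [seq step_edge t | t <- iota a l].

Lemma walk_edgesD a l1 l2 :
  walk_edges a (l1 + l2) = walk_edges a l1 ++ walk_edges (a + l1) l2.
Proof. by rewrite /walk_edges iotaD map_cat. Qed.

Lemma walk_edges_periodic p a l : (forall j, W (j + p) = W j) ->
  walk_edges (a + p) l = walk_edges a l.
Proof.
move=> Wper; rewrite /walk_edges addnC iotaDl -map_comp.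
by apply: eq_map => t /=; rewrite /step_edge addnC Wper -addSn Wper.
Qed.

Lemma window_injective_step_edge d : 2 < d -> window_injective W d ->
  window_injective step_edge d.
Proof.
move=> d_gt2 inj j t t_window; apply/negP => /eqP E.
have /set2P [Wj | Wj] : W j \in step_edge (j + t) by rewrite -E set21.
  by case/negP: (inj j t t_window); rewrite Wj.
have Std : t.+1 = d.
  case: (ltngtP t.+1 d) => [lt_Std | | //]; last by lia.
  have t1_window : 0 < t.+1 < d by lia.
  by case/negP: (inj j t.+1 t1_window); rewrite addnS Wj.
have /set2P [Wjt | Wjt] : W (j + t) \in step_edge j by rewrite E set21.
  by case/negP: (inj j t t_window); rewrite Wjt.
have t1_window : 0 < t.-1 < d by lia.
case/negP: (inj j.+1 t.-1 t1_window).
by rewrite (_ : j.+1 + t.-1 = j + t) ?Wjt //; lia.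
Qed.

Lemma uniq_walk_edges d a : 2 < d -> window_injective W d -> uniq (walk_edges a d).
Proof. by move=> d_gt2 inj; apply/uniq_window/window_injective_step_edge. Qed.

Section Periodic.
Variable p : nat.
Hypothesis W_periodic : forall j, W (j + p) = W j.

Lemma periodic_addMn j k : W (j + k * p) = W j.
Proof.
by elim: k => [|k IHk]; rewrite ?addn0 // mulSn addnCA addnC W_periodic.
Qed.

Lemma periodic_modn j t : W (j %% p + t) = W (j + t).
Proof. by rewrite [in RHS](divn_eq j p) -addnA [in RHS]addnC periodic_addMn. Qed.

Lemma return_time_dvd a t : 0 < p -> window_injective W p ->
  W (a + t) = W a -> p %| t.
Proof.
move=> p_gt0 inj ret; rewrite /dvdn; case: (posnP (t %% p)) => [// | r_gt0].
have r_window : 0 < t %% p < p by rewrite r_gt0 ltn_pmod.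
by case/negP: (inj a (t %% p) r_window); rewrite addnC periodic_modn addnC ret.
Qed.

Lemma shortest_return : 0 < p ->
  exists i d, [/\ 0 < d <= p, W (i + d) = W i & window_injective W d].
Proof.
move=> p_gt0; pose Q d := (0 < d) && [exists i : 'I_p, W (i + d) == W i].
have Qp : Q p.
  by rewrite /Q p_gt0; apply/existsP; exists (Ordinal p_gt0); rewrite W_periodic.
case: (ex_minnP (ex_intro Q p Qp)) => d /andP [d_gt0 /existsP [i /eqP ret]] d_min.
exists i, d; split; [by rewrite d_gt0 d_min | by [] |].
move=> j t t_window; apply/eqP => E.
have : Q t.
  rewrite /Q; case/andP: t_window => -> _; apply/existsP.
  exists (Ordinal (ltn_pmod j p_gt0)).
  by rewrite /= periodic_modn -E -[X in _ == W X]addn0 periodic_modn addn0.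
by move/d_min; lia.
Qed.

End Periodic.

End Walks.

Lemma is_edge_set2 (T : finType) (e : rel T) u v : e u v -> is_edge e [set u; v].
Proof. by move=> uv; apply/existsP; exists u; apply/existsP; exists v; rewrite uv eqxx. Qed.

Section ClosedWalks.
Variables (T : finType) (e : rel T) (W : nat -> T).
Hypothesis W_walk : forall j, e (W j) (W j.+1).

Lemma is_edge_walk_edges a l x : x \in walk_edges W a l -> is_edge e x.
Proof. by case/mapP => t _ ->; apply/is_edge_set2. Qed.

Lemma window_cycle i d : 2 < d -> W (i + d) = W i -> window_injective W d ->
  is_cycle e (mkseq (fun t => W (i + t)) d).
Proof.
move=> d_gt2 ret inj; split; first by rewrite size_mkseq.
split.
  by rewrite /mkseq -[fun t => _]/(W \o addn i) map_comp -iotaDl addn0 uniq_window.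
apply: cycle_mkseq; [lia | by rewrite addn0 | by move=> j _; rewrite addnS].
Qed.

Lemma even_closed_walk_length_ge n m : irreflexive e ->
  (forall c, is_cycle e c -> n <= size c) ->
  0 < m -> (forall j, W (j + m) = W j) -> (forall j, W j.+2 != W j) ->
  (forall a x, is_edge e x -> ~~ odd (count_mem x (walk_edges W a m))) ->
  2 * n <= m.
Proof.
move=> e_irr girth m_gt0 W_periodic no_backtrack even.
have [i [d [/andP [d_gt0 le_dm] ret inj]]] := shortest_return W_periodic m_gt0.
have d_gt2 : 2 < d.
  case: d => [|[|[|d]]] // in d_gt0 le_dm ret inj *.
    by move: (W_walk i); rewrite -ret addn1 e_irr.
  by move: (no_backtrack i); rewrite -ret addn2 eqxx.
have le_nd : n <= d.
  by rewrite -(size_mkseq (fun t => W (i + t)) d); apply/girth/window_cycle.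
have split_period : walk_edges W i m = walk_edges W i d ++ walk_edges W (i + d) (m - d).
  by rewrite -walk_edgesD subnKC.
have return_edges : {subset walk_edges W i d <= walk_edges W (i + d) (m - d)}.
  move=> x x_first; have := even i x (is_edge_walk_edges x_first).
  rewrite split_period count_cat.
  rewrite count_uniq_mem ?uniq_walk_edges // x_first oddD /= negbK.
  by apply: contraLR => /count_memPn ->.
have := uniq_leq_size (uniq_walk_edges i d_gt2 inj) return_edges.
by rewrite !size_map !size_iota; lia.
Qed.

End ClosedWalks.

Section Lift.
Variables (T : finType) (e : rel T).

Definition Edge_of u v (uv : e u v) : Edge e := exist _ [set u; v] (is_edge_set2 uv).

Definition toggle (x : {set T}) (f : {ffun Edge e -> bool}) : {ffun Edge e -> bool} :=
  [ffun y => (val y == x) (+) f y].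

Lemma toggleK x : involutive (toggle x).
Proof. by move=> f; apply/ffunP => y; rewrite !ffunE addKb. Qed.

Lemma lift_relE p q :
  lift_rel e p q = e p.1 q.1 && (q.2 == toggle [set p.1; q.1] p.2).
Proof.
rewrite /lift_rel; case uv: (e p.1 q.1) => //=.
apply/existsP/eqP => [[x /andP [/andP [/eqP x_val flip_x] /forallP keep]] | ->].
  apply/ffunP => y; rewrite ffunE -x_val (inj_eq val_inj).
  have [-> | y_x] := eqVneq y x; first by move: flip_x; case: (p.2 x); case: (q.2 x).
  by rewrite (eqP (implyP (keep y) y_x)).
exists (Edge_of uv); rewrite /= eqxx ffunE /= eqxx /=.
apply/andP; split; first by case: (p.2 _).
apply/forallP => y; apply/implyP => y_uv; rewrite ffunE.
suff -> : (val y == [set p.1; q.1]) = false by [].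
by apply: contraNF y_uv => /eqP y_val; apply/eqP/val_inj.
Qed.

Lemma lift_simple : simple_graph e -> simple_graph (lift_rel e).
Proof.
case=> e_irr e_sym; split=> [p | p q]; first by rewrite lift_relE e_irr.
rewrite !lift_relE e_sym setUC; congr andb.
by apply/eqP/eqP => ->; rewrite toggleK.
Qed.

Lemma lift_regular k : regular e k -> regular (lift_rel e) k.
Proof.
move=> e_reg p; rewrite -(e_reg p.1).
have -> : [set v | e p.1 v] = fst @: [set q | lift_rel e p q].
  apply/setP => v; rewrite inE; apply/idP/imsetP => [uv | [q]].
    by exists (v, toggle [set p.1; v] p.2); rewrite // inE lift_relE uv /=.
  by rewrite inE lift_relE => /andP [uv _] ->.
rewrite card_in_imset // => -[u f] [v g]; rewrite !inE !lift_relE /=.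
by move=> /andP [_ /eqP ->] /andP [_ /eqP ->] ->.
Qed.

Lemma lift_walk_label (P : nat -> lift_vertex e) :
  (forall j, lift_rel e (P j) (P j.+1)) ->
  forall a l y, (P (a + l)).2 y =
    odd (count_mem (val y) (walk_edges (fun j => (P j).1) a l)) (+) (P a).2 y.
Proof.
move=> P_walk a l y; elim: l => [|l IHl]; first by rewrite addn0.
rewrite addnS; move: (P_walk (a + l)); rewrite lift_relE => /andP [_ /eqP ->].
rewrite ffunE -[l.+1]addn1 walk_edgesD count_cat /= oddD IHl addn0 oddb.
by rewrite eq_sym addbCA addbA.
Qed.

Definition parity_lift (W : nat -> T) j : lift_vertex e :=
  (W j, [ffun y => odd (count_mem (val y) (walk_edges W 0 j))]).

Lemma parity_lift_step W : (forall j, e (W j) (W j.+1)) ->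
  forall j, lift_rel e (parity_lift W j) (parity_lift W j.+1).
Proof.
move=> W_walk j; rewrite lift_relE W_walk; apply/eqP/ffunP => y.
rewrite !ffunE -[j.+1]addn1 walk_edgesD count_cat oddD /= addn0 oddb add0n addn1.
by rewrite addbC eq_sym.
Qed.

Lemma lift_cycle_exists c : is_cycle e c ->
  exists s, is_cycle (lift_rel e) s /\ size s = 2 * size c.
Proof.
case=> c_ge3 [c_uniq c_cycle].
have x0 : T by case: c c_ge3 {c_uniq c_cycle} => [// | x].
set n := size c in c_ge3 c_cycle *; have n_gt0 : 0 < n by lia.
pose W j := nth x0 c (j %% n).
have W_walk j : e (W j) (W j.+1) by move/(cycle_nth_modP e x0 n_gt0): c_cycle; apply.
have W_periodic j : W (j + n) = W j by rewrite /W modnDr.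
have W_inj : window_injective W n := uniq_window_nth_mod x0 c_uniq.
pose P := parity_lift W.
have P_walk j : lift_rel e (P j) (P j.+1) by apply: parity_lift_step.
exists (mkseq P (2 * n)); split; last by rewrite size_mkseq.
split; first by rewrite size_mkseq; lia.
split; last first.
  apply: cycle_mkseq => [| | j _]; [lia | | exact: P_walk].
  rewrite /P /parity_lift mul2n -addnn; congr pair.
    by rewrite -{1}[n]add0n !W_periodic.
  apply/ffunP => y; rewrite !ffunE walk_edgesD walk_edges_periodic //.
  by rewrite count_cat addnn odd_double.
apply/mkseq_uniqP => a b; rewrite !inE => lt_a lt_b P_ab.
wlog le_ab : a b lt_a lt_b P_ab / a <= b.
  by move=> wlog; case: (leqP a b) => [|/ltnW] le; [apply: wlog | apply/esym/wlog].
have ret : W (a + (b - a)) = W a by rewrite subnKC //; case: P_ab.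
have := return_time_dvd W_periodic n_gt0 W_inj ret.
case/dvdnP => -[|[|k]] ba; [lia | | lia].
have once : count_mem (step_edge W a) (walk_edges W a n) = 1.
  rewrite count_uniq_mem ?uniq_walk_edges // (map_f (step_edge W)) //.
  by rewrite mem_iota leqnn -{1}[a]addn0 ltn_add2l.
have := lift_walk_label P_walk a n (Edge_of (W_walk a)).
have -> : a + n = b by lia.
by rewrite -[P b]P_ab once; case: ((P a).2 _).
Qed.

Lemma lift_cycle_size_ge n s : irreflexive e ->
  (forall c, is_cycle e c -> n <= size c) ->
  is_cycle (lift_rel e) s -> 2 * n <= size s.
Proof.
move=> e_irr girth [s_ge3 [s_uniq s_cycle]].
have p0 : lift_vertex e by case: s s_ge3 {s_uniq s_cycle} => [// | p].
set m := size s in s_ge3 s_cycle *; have m_gt0 : 0 < m by lia.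
pose P j := nth p0 s (j %% m).
have P_walk j : lift_rel e (P j) (P j.+1).
  by move/(cycle_nth_modP (lift_rel e) p0 m_gt0): s_cycle; apply.
have P_periodic j : P (j + m) = P j by rewrite /P modnDr.
have P_inj : window_injective P m := uniq_window_nth_mod p0 s_uniq.
have label := lift_walk_label P_walk.
pose W j := (P j).1.
apply: (even_closed_walk_length_ge (W := W)) => //.
- by move=> j; move: (P_walk j); rewrite lift_relE => /andP [].
- by move=> j; rewrite /W P_periodic.
- (* Backtracking toggles the same edge twice and so revisits a vertex of s. *)
  move=> j; apply/eqP => back.
  have window2 : 0 < 2 < m by lia.
  case/negP: (P_inj j 2 window2); apply/eqP.
  rewrite [P j]surjective_pairing [P (j + 2)]surjective_pairing addn2.
  congr pair; first exact: esym back.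
  have two_steps : walk_edges W j 2 = [:: step_edge W j; step_edge W j].
    by rewrite /walk_edges /= {2}/step_edge back setUC.
  apply/ffunP => y; rewrite -addn2 label [walk_edges _ j 2]two_steps /=.
  by rewrite addn0 addnn odd_double.
- move=> a x x_edge; have := label a m (exist _ x x_edge).
  by rewrite P_periodic -[X in X = _]addFb => /addIb <-.
Qed.

End Lift.

Theorem proposition4p2 (T : finType) (e : rel T) (k n : nat) :
  simple_graph e -> regular e k -> min_cycle_length e n ->
  (simple_graph (lift_rel e) /\ regular (lift_rel e) k) /\
  min_cycle_length (lift_rel e) (2 * n).
Proof.
move=> e_simple e_regular [[c [c_cycle c_size]] girth].
split; first by split; [exact: lift_simple | exact: lift_regular].
split; last by move=> s; apply: lift_cycle_size_ge => //; case: e_simple.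
have [s [s_cycle s_size]] := lift_cycle_exists c_cycle.
by exists s; rewrite s_size c_size.
Qed.
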